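(* Consider the system $x[k+1]=Ax[k]+Bu[k]+w[k]$, $y[k]=x[k]+v[k]$ in closed loop with the controller $x_K[k+1]=A_Kx_K[k]+B_Ky[k]$, $u[k]=C_Kx_K[k]+D_Ky[k]$ ($x\in\mathbb{R}^n$, $x_K\in\mathbb{R}^{n_K}$), with closed-loop matrices $$A_{CL}=\begin{bmatrix}A+BD_K & BC_K\\ B_K & A_K\end{bmatrix},\qquad B_{CL}=\begin{bmatrix}I_n & BD_K\\ O & B_K\end{bmatrix}.$$ Let $\eta\in(0,1)$, let $\widetilde H_I\in\mathbb{R}^{(n+n_K)\times(n+n_K)}$ with $\det(\widetilde H_I)\neq0$, and let $$\widetilde\Omega_I:=\{\xi\in\mathbb{R}^{n+n_K}:-1_{n+n_K}\le\widetilde H_I\xi\le 1_{n+n_K}\}.$$ Let $\varepsilon_s$ satisfy $\varepsilon_p+\varepsilon_m<\varepsilon_s<1$, and assume: C1) $A_{CL}\widetilde\Omega_I\oplus B_{CL}\mathcal{Z}\subseteq\eta\,\widetilde\Omega_I$; C2) $[I_n\ O]\,\widetilde\Omega_I\subseteq(\varepsilon_s-\varepsilon_p-\varepsilon_m)\,\mathcal{S}$. Then: (a) the set $\Omega_I:=[I_n\ O]\widetilde\Omega_I\oplus\mathcal{N}$ satisfies: I1) $\Omega_I\subseteq\varepsilon_s\mathcal{S}$; I2) $\{r\in\mathbb{R}^n:\|r\|\le\alpha\}\subseteq\Omega_I\ominus\mathcal{N}$ with $\alpha=1/\|\widetilde H_I\|$; I3) $\bigoplus_{i=0}^N[I_n\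 O]A_{CL}^iB_{CL}\mathcal{Z}\subseteq\beta(\Omega_I\ominus\mathcal{N})$ for all $N\in\mathbb{N}$, with $\beta=\eta$; (b) the matrix $A_{CL}$ is Schur.
   Context: Notation: $\oplus$ Minkowski sum, $\ominus$ Pontryagin difference ($\mathcal{X}\ominus\mathcal{Y}=\{x:x+y\in\mathcal{X}\ \forall y\in\mathcal{Y}\}$), $(-\mathcal{V})=\{-v:v\in\mathcal{V}\}$, $1_p$ the all-ones vector of dimension $p$, vector inequalities componentwise, $\|\cdot\|$ the Euclidean norm / induced matrix 2-norm, $[I_n\ O]$ the projection onto the first $n$ coordinates. Standing assumptions: $\mathcal{W},\mathcal{V},\mathcal{D},\mathcal{S},\mathcal{X}\subset\mathbb{R}^n$ are polytopes containing the origin in their interiors, $\mathcal{S}\subset\mathcal{X}$; $\varepsilon_p,\varepsilon_m\in(0,1)$ satisfy $\mathcal{V}\subseteq\varepsilon_p\mathcal{S}$ and $(-\mathcal{V})\subseteq\varepsilon_m\mathcal{S}$; some closed Euclidean ball of positive radius centered at $0$ lies in $\mathcal{S}$; $A\mathcal{S}\oplus\mathcal{W}\oplus\mathcal{D}\subseteq\mathcal{X}$. Define $\mathcal{Z}:=\mathcal{W}\times\mathcal{V}\subset\mathbb{R}^{2n}$ and $\mathcal{N}:=(-\mathcal{V})\oplus\mathcal{V}$. *)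

From HB Require Import structures.
From mathcomp Require Import all_boot all_order all_algebra.
From mathcomp Require Import boolp classical_sets reals.
From mathcomp Require Import complex.
Set Implicit Arguments.
Unset Strict Implicit.
Unset Printing Implicit Defensive.
Import Order.TTheory GRing.Theory Num.Theory.
Local Open Scope ring_scope.
Local Open Scope classical_set_scope.

Section Defs.
Variable R : realType.

Definition vnorm {n} (x : 'cV[R]_n) : R := Num.sqrt (\sum_i (x i 0) ^+ 2).

Definition mnorm2 {p q} (M : 'M[R]_(p, q)) : R :=
  sup [set vnorm (M *m x) | x in [set x : 'cV[R]_q | vnorm x <= 1]].

Definition cball0 n (r : R) : set 'cV[R]_n := [set x | vnorm x <= r].

Definition msum {n} (X Y : set 'cV[R]_n) : set 'cV[R]_n :=
  [set x + y | x in X & y in Y].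

Definition pdiff {n} (X Y : set 'cV[R]_n) : set 'cV[R]_n :=
  [set x | forall y, Y y -> X (x + y)].

Definition sscale {n} (c : R) (X : set 'cV[R]_n) : set 'cV[R]_n :=
  [set c *: x | x in X].

Definition limage {p q} (M : 'M[R]_(p, q)) (X : set 'cV[R]_q) : set 'cV[R]_p :=
  [set M *m x | x in X].

Definition sneg {n} (X : set 'cV[R]_n) : set 'cV[R]_n := [set - x | x in X].

Definition sprod {n m} (W : set 'cV[R]_n) (V : set 'cV[R]_m) : set 'cV[R]_(n + m) :=
  [set col_mx w v | w in W & v in V].

Fixpoint msum_iter {n} (F : nat -> set 'cV[R]_n) (N : nat) : set 'cV[R]_n :=
  match N with
  | O => F 0%N
  | S N' => msum (msum_iter F N') (F N)
  end.

Definition polytope {n} (P : set 'cV[R]_n) : Prop :=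
  (exists (p : nat) (H : 'M[R]_(p, n)) (h : 'cV[R]_p),
      P = [set x | forall i, (H *m x) i 0 <= h i 0])
  /\ (exists M : R, forall x, P x -> vnorm x <= M).

Definition zero_interior {n} (P : set 'cV[R]_n) : Prop :=
  exists r : R, 0 < r /\ [set x | vnorm x < r] `<=` P.

Definition schur {n} (A : 'M[R]_n) : Prop :=
  forall z : R[i], eigenvalue (map_mx (fun x : R => (x%:C)%C) A) z -> `|z| < 1.

Definition box_set {p} (H : 'M[R]_p) : set 'cV[R]_p :=
  [set xi | forall i, -1 <= (H *m xi) i 0 <= 1].

End Defs.

(* I1: S is convex, so
   aS (+) bS is contained in (a+b)S and the three contributions add up to
   eps_s S.  I2: a vector r with |r| <= 1/|H_I| lifts to (r, 0), whose image
   under H_I has sup-norm at most 1.  I3: C1 makes the box Omega~_I both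
   eta-contractive and invariant, so by induction every reachable sum
   sum_i A_CL^i B_CL z_i lies in eta Omega~_I, and its projection in
   eta (Omega_I (-) N).
   Part (b): if A_CL c = z c with c complex, put w = H_I c and pick i
   maximising |w_i|.  The real vector r = Re(conj(z w_i) c) satisfies
   |H_I r|_oo <= |z| |w_i|^2 while (H_I A_CL r)_i = |z|^2 |w_i|^2, so the
   eta-contraction of the box forces |z| <= eta < 1. *)

From HB Require Import structures.
From mathcomp Require Import all_boot all_order all_algebra.
From mathcomp Require Import boolp classical_sets reals.
From mathcomp Require Import complex.
From mathcomp Require Import ring lra.
Set Implicit Arguments.
Unset Strict Implicit.
Unset Printing Implicit Defensive.

Import Order.TTheory GRing.Theory Num.Theory.
Local Open Scope ring_scope.
Local Open Scope classical_set_scope.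

Section EuclideanNorm.
Variable R : realType.

Lemma vnorm_ge0 n (x : 'cV[R]_n) : 0 <= vnorm x.
Proof. exact: sqrtr_ge0. Qed.

Lemma vnorm0 n : vnorm (0 : 'cV[R]_n) = 0.
Proof. by rewrite /vnorm big1 ?sqrtr0 // => i _; rewrite mxE expr0n. Qed.

Lemma vnorm_eq0 n (x : 'cV[R]_n) : (vnorm x == 0) = (x == 0).
Proof.
apply/idP/eqP => [|->]; last by rewrite vnorm0.
rewrite sqrtr_eq0 le_eqVlt ltNge sumr_ge0 ?orbF => [|i _]; last exact: sqr_ge0.
move=> /eqP/psumr_eq0P x2_eq0; apply/matrixP => i j; rewrite ord1 mxE.
by apply/eqP; rewrite -sqrf_eq0 x2_eq0 // => k _; exact: sqr_ge0.
Qed.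

Lemma vnormZ n (c : R) (x : 'cV[R]_n) : vnorm (c *: x) = `|c| * vnorm x.
Proof.
rewrite /vnorm -sqrtr_sqr -sqrtrM ?sqr_ge0 // mulr_sumr.
by congr Num.sqrt; apply: eq_bigr => i _; rewrite mxE exprMn.
Qed.

Lemma vnorm_col_mx0 n k (x : 'cV[R]_n) : vnorm (col_mx x (0 : 'cV[R]_k)) = vnorm x.
Proof.
rewrite /vnorm big_split_ord /= [X in _ + X]big1 ?addr0 => [|i _].
  by congr Num.sqrt; apply: eq_bigr => i _; rewrite col_mxEu.
by rewrite col_mxEd mxE expr0n.
Qed.

Lemma ler_coord_vnorm n (x : 'cV[R]_n) i : `|x i 0| <= vnorm x.
Proof.
rewrite /vnorm -sqrtr_sqr ler_sqrt ?sumr_ge0 // => [|j _]; last exact: sqr_ge0.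
by rewrite (bigD1 i) //= lerDl sumr_ge0 // => j _; exact: sqr_ge0.
Qed.

Lemma vnorm_mulmx_bounded p q (M : 'M[R]_(p, q)) :
  has_ubound [set vnorm (M *m x) | x in [set x | vnorm x <= 1]].
Proof.
pose c i := \sum_j `|M i j|.
exists (Num.sqrt (\sum_i c i ^+ 2)) => _ [x /= x_le1 <-].
rewrite /vnorm ler_sqrt ?sumr_ge0 // => [|i _]; last exact: sqr_ge0.
apply: ler_sum => i _; rewrite -real_normK ?num_real //.
rewrite ler_pXn2r // ?nnegrE ?sumr_ge0 //.
rewrite mxE (le_trans (ler_norm_sum _ _ _)) // ler_sum // => j _.
by rewrite normrM ler_piMr // (le_trans (ler_coord_vnorm x j)).
Qed.

Lemma vnorm_mulmx_le p q (M : 'M[R]_(p, q)) (x : 'cV[R]_q) :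
  vnorm (M *m x) <= mnorm2 M * vnorm x.
Proof.
have [->|x_neq0] := eqVneq x 0; first by rewrite mulmx0 !vnorm0 mulr0.
have x_gt0 : 0 < vnorm x by rewrite lt_def vnorm_eq0 x_neq0 vnorm_ge0.
have unit_x : vnorm ((vnorm x)^-1 *: x) <= 1.
  by rewrite vnormZ ger0_norm ?invr_ge0 ?vnorm_ge0 // mulVf ?gt_eqF.
have := ub_le_sup (vnorm_mulmx_bounded M) (ex_intro2 _ _ ((vnorm x)^-1 *: x) unit_x erefl).
rewrite -scalemxAr vnormZ ger0_norm ?invr_ge0 ?vnorm_ge0 //.
by rewrite ler_pdivrMl // mulrC.
Qed.

End EuclideanNorm.

Section SetAlgebra.
Variable R : realType.
Implicit Types (a b t : R).

Lemma msumSS n (X X' Y Y' : set 'cV[R]_n) :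
  X `<=` X' -> Y `<=` Y' -> msum X Y `<=` msum X' Y'.
Proof.
by move=> sXX' sYY' _ [x Xx [y Yy <-]]; exists x; [exact: sXX'|exists y => //; exact: sYY'].
Qed.

Lemma sscaleS n t (X Y : set 'cV[R]_n) : X `<=` Y -> sscale t X `<=` sscale t Y.
Proof. by move=> sXY _ [x Xx <-]; exists x => //; exact: sXY. Qed.

Lemma limage_sscale p q (M : 'M[R]_(p, q)) t (X : set 'cV[R]_q) :
  limage M (sscale t X) `<=` sscale t (limage M X).
Proof. by move=> _ [_ [x Xx <-] <-]; exists (M *m x); [exists x|rewrite scalemxAr]. Qed.

Lemma zero_interior0 n (P : set 'cV[R]_n) : zero_interior P -> P 0.
Proof. by case=> r [r_gt0 ballP]; apply: ballP; rewrite /= vnorm0. Qed.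

Lemma sub_pdiff_msum n (X Y : set 'cV[R]_n) : X `<=` pdiff (msum X Y) Y.
Proof. by move=> x Xx y Yy; exists x => //; exists y. Qed.

Lemma msum_sscale_polytope n (P : set 'cV[R]_n) a b :
  polytope P -> 0 < a -> 0 < b -> msum (sscale a P) (sscale b P) `<=` sscale (a + b) P.
Proof.
move=> [[p [H [h ->]]] _] a_gt0 b_gt0 _ [_ [x Px <-] [_ [y Py <-] <-]].
have ab_gt0 : 0 < a + b by rewrite addr_gt0.
exists ((a + b)^-1 *: (a *: x + b *: y)); last by rewrite scalerA divff ?scale1r ?gt_eqF.
move=> i /=; rewrite -scalemxAr mulmxDr -!scalemxAr !mxE ler_pdivrMl // mulrDl.
by rewrite lerD // ler_pM2l //; [move: (Px i) | move: (Py i)]; rewrite /= mxE.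
Qed.

Lemma box_setP p (H : 'M[R]_p) x : box_set H x <-> forall i, `|(H *m x) i 0| <= 1.
Proof. by split=> Hx i; [rewrite ler_norml|rewrite -ler_norml]. Qed.

Lemma box_set0 p (H : 'M[R]_p) : box_set H 0.
Proof. by apply/box_setP => i; rewrite mulmx0 mxE normr0. Qed.

Lemma sscale_box_set p (H : 'M[R]_p) t :
  0 <= t <= 1 -> sscale t (box_set H) `<=` box_set H.
Proof.
move=> /andP[t_ge0 t_le1] _ [x /box_setP Hx <-]; apply/box_setP => i.
by rewrite -scalemxAr mxE normrM ger0_norm // mulr_ile1.
Qed.

Lemma cball0_sub_box_set p (H : 'M[R]_p) : cball0 (1 / mnorm2 H) `<=` box_set H.
Proof.
move=> x /= x_small; apply/box_setP => i.
apply: le_trans (ler_coord_vnorm _ i) _; apply: le_trans (vnorm_mulmx_le H x) _.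
have [H_le0|H_gt0] := lerP (mnorm2 H) 0.
  by rewrite (le_trans _ ler01) // mulr_le0_ge0 ?vnorm_ge0.
by rewrite mulrC -ler_pdivlMr.
Qed.

Lemma cball0_sub_limage_box_set n k (H : 'M[R]_(n + k)) :
  cball0 (1 / mnorm2 H) `<=` limage (row_mx 1%:M 0) (box_set H).
Proof.
move=> x x_small; exists (col_mx x 0); last by rewrite mul_row_col mul1mx mul0mx addr0.
by apply: cball0_sub_box_set; rewrite /cball0 /= vnorm_col_mx0.
Qed.

End SetAlgebra.

Lemma msum_iter_limageP (R : realType) n l (M : nat -> 'M[R]_(n, l))
    (Z : set 'cV[R]_l) N y :
  msum_iter (fun i => limage (M i) Z) N y ->
  exists2 z : nat -> 'cV[R]_l, (forall i, Z (z i)) & y = \sum_(i < N.+1) M i *m z i.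
Proof.
elim: N y => [|N IHN] y /=.
  by case=> z0 Zz0 <-; exists (fun=> z0) => //; rewrite big_ord1.
case=> _ /IHN[z Zz ->] [_ [z' Zz' <-] <-].
exists (fun i => if i == N.+1 then z' else z i) => [i|]; first by case: ifP.
rewrite [RHS]big_ord_recr /= eqxx; congr (_ + _).
by apply: eq_bigr => i _; rewrite ltn_eqF.
Qed.

Section InvariantReach.
Variables (R : realType) (k l : nat) (A : 'M[R]_k) (B : 'M[R]_(k, l)).
Variables (Omega : set 'cV[R]_k) (Z : set 'cV[R]_l) (eta : R).
Hypothesis invariant : msum (limage A Omega) (limage B Z) `<=` sscale eta Omega.
Hypothesis shrink : sscale eta Omega `<=` Omega.
Hypothesis Omega0 : Omega 0.

Lemma invariant_step x z : Omega x -> Z z -> sscale eta Omega (A *m x + B *m z).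
Proof.
by move=> Ox Zz; apply: invariant; exists (A *m x); [exists x|exists (B *m z); first exists z].
Qed.

Lemma limage_contraction : Z 0 -> limage A Omega `<=` sscale eta Omega.
Proof. by move=> Z0 _ [x Ox <-]; have := invariant_step Ox Z0; rewrite mulmx0 addr0. Qed.

Lemma invariant_sum_reach N (z : nat -> 'cV[R]_l) :
  (forall i, Z (z i)) -> sscale eta Omega (\sum_(i < N) A ^+ i *m B *m z i).
Proof.
elim: N z => [|N IHN] z Zz; first by rewrite big_ord0; exists 0; rewrite ?scaler0.
have -> : \sum_(i < N.+1) A ^+ i *m B *m z i
    = A *m (\sum_(i < N) A ^+ i *m B *m z i.+1) + B *m z 0%N.
  rewrite big_ord_recl expr0 mul1mx addrC mulmx_sumr; congr (_ + _).
  by apply: eq_bigr => i _; rewrite exprS !mulmxA.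
apply: invariant_step (Zz 0%N); apply: shrink.
exact: (IHN (fun i => z i.+1)).
Qed.

Lemma msum_iter_reach_sub p (P : 'M[R]_(p, k)) N :
  msum_iter (fun i => limage (P *m A ^+ i *m B) Z) N `<=` limage P (sscale eta Omega).
Proof.
move=> _ /msum_iter_limageP[z Zz ->]; exists (\sum_(i < N.+1) A ^+ i *m B *m z i).
  exact: invariant_sum_reach.
by rewrite mulmx_sumr; apply: eq_bigr => i _; rewrite !mulmxA.
Qed.

End InvariantReach.

Section SchurFromBoxContraction.
Variable R : realType.
Local Notation normc := (@Normc.normc R).
Local Notation Re := (@complex.Re R).
Local Notation mxC := (map_mx (real_complex R)).

Lemma normc_ge0 (w : R[i]) : 0 <= normc w.
Proof. by case: w => a b; exact: sqrtr_ge0. Qed.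

Lemma Re_le_normc (w : R[i]) : `|Re w| <= normc w.
Proof.
case: w => a b; rewrite /Normc.normc /= -sqrtr_sqr ler_sqrt ?addr_ge0 ?sqr_ge0 //.
by rewrite lerDl sqr_ge0.
Qed.

Lemma normc_conj (w : R[i]) : normc (w^*)%C = normc w.
Proof. by case: w => a b; rewrite /Normc.normc /= sqrrN. Qed.

Lemma Re_conjM (w : R[i]) : Re ((w^*)%C * w) = normc w ^+ 2.
Proof. by case: w => a b; rewrite /Normc.normc sqr_sqrtr ?addr_ge0 ?sqr_ge0 //=; ring. Qed.

Lemma Re_realM (x : R) (w : R[i]) : Re ((x%:C)%C * w) = x * Re w.
Proof. by case: w => a b /=; rewrite mul0r subr0. Qed.

Lemma normc_lt1 (z : R[i]) : normc z < 1 -> `|z| < 1.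
Proof. by case: z => a b; rewrite normc_def /= -(rmorph1 (real_complex R)) ltcR. Qed.

Lemma mulmx_col_Re p k (P : 'M[R]_(p, k)) (u : R[i]) (c : 'cV[R[i]]_k) j :
  (P *m \col_l Re (u * c l 0)) j 0 = Re (u * (mxC P *m c) j 0).
Proof.
rewrite !mxE mulr_sumr; apply: (big_ind2 (fun x y => x = Re y)) => //.
  by move=> x1 x2 y1 y2 -> ->; case: x2 => ? ?; case: y2.
by move=> l _; rewrite !mxE mulrCA Re_realM.
Qed.

Lemma eigenvalue_col k (M : 'M[R[i]]_k) z : eigenvalue M z ->
  exists2 c : 'cV[R[i]]_k, M *m c = z *: c & c != 0.
Proof.
move=> Mz; have /eigenvalueP[v vMz v_neq0] : eigenvalue M^T z.
  move: Mz; rewrite /eigenvalue /eigenspace !kermx_eq0 !row_free_unit.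
  by rewrite -unitmx_tr linearB /= tr_scalar_mx.
exists v^T; first by rewrite -[M]trmxK -trmx_mul vMz linearZ.
by apply: contra v_neq0 => /eqP/(congr1 trmx); rewrite trmxK linear0 => ->.
Qed.

Lemma exists_max_normc k (w : 'cV[R[i]]_k) : w != 0 ->
  exists i, 0 < normc (w i 0) /\ forall j, normc (w j 0) <= normc (w i 0).
Proof.
move=> w_neq0; have [i0 wi0_neq0] : exists i0, w i0 0 != 0.
  apply/existsP; apply: contraR w_neq0 => /existsPn w_eq0.
  by apply/eqP/matrixP => i j; rewrite ord1 mxE; exact/eqP/negPn/w_eq0.
have wi0_gt0 : 0 < normc (w i0 0).
  by rewrite lt_def normc_ge0 andbT; apply: contra wi0_neq0 => /eqP/Normc.eq0_normc ->.
exists (Order.arg_max i0 xpredT (fun j => normc (w j 0))).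
case: arg_maxP => //= i _ i_max; split=> [|j]; last exact: i_max.
exact: lt_le_trans wi0_gt0 (i_max i0 isT).
Qed.

Variables (k : nat) (H A : 'M[R]_k) (eta : R).
Hypothesis eta_ge0 : 0 <= eta.
Hypothesis contraction : limage A (box_set H) `<=` sscale eta (box_set H).

Lemma box_contraction_scale (r : 'cV[R]_k) s :
  0 < s -> (forall j, `|(H *m r) j 0| <= s) -> forall j, `|(H *m (A *m r)) j 0| <= eta * s.
Proof.
move=> s_gt0 Hr j; have r_box : box_set H (s^-1 *: r).
  by apply/box_setP => i; rewrite -scalemxAr mxE normrM gtr0_norm ?invr_gt0 // ler_pdivrMl ?mulr1.
have [y /box_setP Hy yA] := contraction (ex_intro2 _ _ _ r_box erefl).
have -> : A *m r = (s * eta) *: y.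
  by rewrite -scalerA yA -scalemxAr scalerA mulfV ?gt_eqF ?scale1r.
have s_ge0 := ltW s_gt0.
by rewrite -scalemxAr mxE normrM ger0_norm ?mulr_ge0 // (mulrC eta) ler_piMr ?mulr_ge0.
Qed.

Hypothesis H_unit : \det H != 0.

Lemma box_contraction_eigenvalue z :
  eigenvalue (mxC A) z -> normc z <= eta.
Proof.
move=> /eigenvalue_col[c Ac c_neq0].
have [->|z_neq0] := eqVneq z 0; first by rewrite Normc.normc0.
pose w := mxC H *m c.
have w_neq0 : w != 0.
  have HC_unit : mxC H \in unitmx.
    by rewrite unitmxE det_map_mx unitfE; apply: contra H_unit => /eqP[->].
  by apply: contra c_neq0 => /eqP w0; rewrite -(mulKmx HC_unit c) -/w w0 mulmx0.
have [i [wi_gt0 i_max]] := exists_max_normc w_neq0.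
set M := normc (w i 0) in wi_gt0 i_max.
have z_gt0 : 0 < normc z.
  by rewrite lt_def normc_ge0 andbT; apply: contra z_neq0 => /eqP/Normc.eq0_normc ->.
pose u := ((z * w i 0)^*)%C; pose r := \col_l Re (u * c l 0).
have Hr j : `|(H *m r) j 0| <= normc z * M * M.
  rewrite mulmx_col_Re -/w (le_trans (Re_le_normc _)) //.
  by rewrite Normc.normcM normc_conj Normc.normcM ler_wpM2l ?mulr_ge0 ?normc_ge0.
have HAr : (H *m (A *m r)) i 0 = (normc z * M) ^+ 2.
  by rewrite mulmxA mulmx_col_Re map_mxM -mulmxA Ac -scalemxAr mxE Re_conjM Normc.normcM.
have KM_gt0 : 0 < normc z * M * M by rewrite !mulr_gt0.
have := box_contraction_scale KM_gt0 Hr i.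
rewrite HAr ger0_norm ?sqr_ge0 //.
have -> : (normc z * M) ^+ 2 = normc z * (normc z * M * M) by ring.
by rewrite ler_pM2r.
Qed.

End SchurFromBoxContraction.

Lemma schur_box_contraction (R : realType) k (H A : 'M[R]_k) (eta : R) :
  \det H != 0 -> 0 <= eta < 1 ->
  limage A (box_set H) `<=` sscale eta (box_set H) -> schur A.
Proof.
move=> H_unit /andP[eta_ge0 eta_lt1] contraction z Az; apply: normc_lt1.
exact: le_lt_trans (box_contraction_eigenvalue eta_ge0 contraction H_unit Az) eta_lt1.
Qed.

Theorem theorem2 (R : realType) (n m nK : nat)
  (A : 'M[R]_n) (B : 'M[R]_(n, m))
  (AK : 'M[R]_nK) (BK : 'M[R]_(nK, n)) (CK : 'M[R]_(m, nK)) (DK : 'M[R]_(m, n))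
  (W V D S X : set 'cV[R]_n) (eps_p eps_m eps_s eta : R)
  (HI : 'M[R]_(n + nK))
  (* standing assumptions *)
  (hW : polytope W) (hV : polytope V) (hD : polytope D)
  (hS : polytope S) (hX : polytope X)
  (hW0 : zero_interior W) (hV0 : zero_interior V) (hD0 : zero_interior D)
  (hS0 : zero_interior S) (hX0 : zero_interior X)
  (hSX : S `<=` X)
  (hep : 0 < eps_p < 1) (hem : 0 < eps_m < 1)
  (hVp : V `<=` sscale eps_p S) (hVm : sneg V `<=` sscale eps_m S)
  (hball : exists r : R, 0 < r /\ @cball0 R n r `<=` S)
  (hASX : msum (msum (limage A S) W) D `<=` X)
  (* hypotheses of the theorem *)
  (heta : 0 < eta < 1)
  (hHI : \det HI != 0)
  (hes : eps_p + eps_m < eps_s < 1) :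
  let ACL : 'M[R]_(n + nK) := block_mx (A + B *m DK) (B *m CK) BK AK in
  let BCL : 'M[R]_(n + nK, n + n) := block_mx 1%:M (B *m DK) 0 BK in
  let Z : set 'cV[R]_(n + n) := sprod W V in
  let Nset : set 'cV[R]_n := msum (sneg V) V in
  let Pn : 'M[R]_(n, n + nK) := row_mx 1%:M 0 in
  let OmegaT : set 'cV[R]_(n + nK) := box_set HI in
  (* C1 *) msum (limage ACL OmegaT) (limage BCL Z) `<=` sscale eta OmegaT ->
  (* C2 *) limage Pn OmegaT `<=` sscale (eps_s - eps_p - eps_m) S ->
  let OmegaI : set 'cV[R]_n := msum (limage Pn OmegaT) Nset in
  let alpha : R := 1 / mnorm2 HI in
  let beta : R := eta in
  ((* I1 *) OmegaI `<=` sscale eps_s S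
   /\ (* I2 *) @cball0 R n alpha `<=` pdiff OmegaI Nset
   /\ (* I3 *) (forall N : nat,
        msum_iter (fun i => limage (Pn *m ACL ^+ i *m BCL) Z) N
          `<=` sscale beta (pdiff OmegaI Nset)))
  /\ (* (b) *) schur ACL.
Proof.
move=> ACL BCL Z Nset Pn OmegaT C1 C2 OmegaI alpha beta.
have Z0 : Z 0.
  by exists 0; [exact: zero_interior0|exists 0; [exact: zero_interior0|rewrite col_mx0]].
have [eta_gt0 eta_lt1] := andP heta.
have shrink : sscale eta OmegaT `<=` OmegaT by apply: sscale_box_set; rewrite !ltW.
have proj_sub : limage Pn OmegaT `<=` pdiff OmegaI Nset by exact: sub_pdiff_msum.
split; last by apply: (schur_box_contraction hHI _ (limage_contraction C1 Z0)); rewrite ltW.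
split; [|split].
- have [[eps_p_gt0 _] [eps_m_gt0 _]] := (andP hep, andP hem).
  have c_gt0 : 0 < eps_s - eps_p - eps_m by case/andP: hes => ? _; lra.
  have -> : eps_s = (eps_s - eps_p - eps_m) + (eps_m + eps_p) by ring.
  apply: subset_trans (msum_sscale_polytope hS c_gt0 (addr_gt0 eps_m_gt0 eps_p_gt0)).
  apply: msumSS C2 _; apply: subset_trans (msum_sscale_polytope hS eps_m_gt0 eps_p_gt0).
  exact: msumSS.
- exact: subset_trans (cball0_sub_limage_box_set (H := HI)) proj_sub.
- move=> N x /(msum_iter_reach_sub C1 shrink (box_set0 HI)) /limage_sscale.
  by rewrite /beta; apply: sscaleS; exact: proj_sub.
Qed.
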